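(* For every integer $n\geq 1$, $$F_n(x):=\sum_{k\geq 0} a(n,k)\,x^k=\prod_{i=0}^{n-1}\left(1+x^{2^i}+x^{2\cdot 2^i}\right).$$
   Context: Stern's triangle is the array of integers $a(n,k)$, $n\geq 0$, $k\in\mathbb{Z}$, defined as follows. Row $n$ consists of the entries $a(n,0),\dots,a(n,N_n)$ with $N_n=2^{n+1}-2$, and $a(n,k)=0$ if $k<0$ or $k>N_n$. Row $0$ is the single entry $a(0,0)=1$. Row $n+1$ is obtained from row $n$ (with $N=N_n$) by $a(n+1,0)=1$, $a(n+1,2j+1)=a(n,j)$ for $0\leq j\leq N$, $a(n+1,2j+2)=a(n,j)+a(n,j+1)$ for $0\leq j\leq N-1$, and $a(n+1,2N+2)=1$. In words: each entry of row $n$ is copied directly below into row $n+1$, the sum of each two consecutive entries of row $n$ is placed between them in row $n+1$, and row $n+1$ begins and ends with $1$. The first rows are $1$; $1,1,1$; $1,1,2,1,2,1,1$; $1,1,2,1,3,2,3,1,3,2,3,1,2,1,1$. *)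

From mathcomp Require Import all_boot all_order all_algebra.
Set Implicit Arguments. Unset Strict Implicit. Unset Printing Implicit Defensive.
Import GRing.Theory.
Local Open Scope ring_scope.

Definition Nlast (n : nat) : nat := (2 ^ n.+1 - 2)%N.

(* Stern's triangle a(n,k), for k : nat (entries with k < 0 are 0 and
   do not contribute to the generating function). Literal transcription
   of the recursive definition. *)
Fixpoint stern (n k : nat) {struct n} : nat :=
  match n with
  | 0 => (k == 0)%N : nat
  | m.+1 =>
      let N := Nlast m in
      if (k == 0)%N then 1%N
      else if (k == (2 * N).+2)%N then 1%N
      else if ((2 * N).+2 < k)%N then 0%N
      else if odd k then stern m k./2             (* k = 2j+1 -> a(m,j) *)
      else (stern m k.-2./2 + stern m k./2)%N     (* k = 2j+2 -> a(m,j)+a(m,j+1) *)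
  end.

Definition sternF (n : nat) : {poly int} :=
  \poly_(k < (Nlast n).+1) ((stern n k)%:R : int).

From mathcomp Require Import all_boot all_order all_algebra.
From mathcomp Require Import zify.
Import GRing.Theory.
Local Open Scope ring_scope.

(* The construction of row n+1 from row n says exactly that
   F_{n+1}(x) = (1 + x + x^2) F_n(x^2): the term x^{2j+1} a(n,j) comes from
   x F_n(x^2), and x^{2j+2} (a(n,j) + a(n,j+1)) from (x^2 + 1) F_n(x^2).
   Iterating from F_0 = 1 gives the product, since substituting x^2 into
   prod_{i<n} (1 + x^{2^i} + x^{2 2^i}) shifts every exponent 2^i to 2^{i+1}. *)

Lemma NlastS m : Nlast m.+1 = (2 * Nlast m).+2.
Proof. rewrite /Nlast !expnS; have := expn_gt0 2 m; lia. Qed.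

Lemma stern_gt_Nlast n k : (Nlast n < k)%N -> stern n k = 0%N.
Proof.
case: n => [|m] /=; first by rewrite /Nlast; case: k.
rewrite NlastS => ltNk.
have -> : (k == 0)%N = false by lia.
have -> : (k == (2 * Nlast m).+2)%N = false by lia.
by rewrite ltNk.
Qed.

Lemma stern0 n : stern n 0 = 1%N.
Proof. by case: n. Qed.

Lemma stern_Nlast n : stern n (Nlast n) = 1%N.
Proof. by case: n => [|m] //=; rewrite NlastS eqxx. Qed.

Lemma stern_odd m j : stern m.+1 j.*2.+1 = stern m j.
Proof.
rewrite /=; have -> : (j.*2.+1 == (2 * Nlast m).+2)%N = false by lia.
case: ltnP => [ltNk | _]; last by rewrite odd_double /= uphalf_double.
by rewrite stern_gt_Nlast //; lia.
Qed.

Lemma stern_even m j : stern m.+1 j.+1.*2 = (stern m j + stern m j.+1)%N.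
Proof.
rewrite /= odd_double doubleK.
case: (ltngtP j (Nlast m)) => [ltjN | ltNj | ->].
- have -> : (j.+1.*2 == (2 * Nlast m).+2)%N = false by lia.
  by have -> : ((2 * Nlast m).+2 < j.+1.*2)%N = false by lia.
- have -> : (j.+1.*2 == (2 * Nlast m).+2)%N = false by lia.
  by rewrite ifT ?stern_gt_Nlast //; lia.
- by rewrite doubleS -mul2n eqxx stern_Nlast stern_gt_Nlast.
Qed.

Lemma coef_sternF n k : (sternF n)`_k = (stern n k)%:R.
Proof. by rewrite coef_poly; case: ltnP => // leNk; rewrite stern_gt_Nlast. Qed.

Section TrinomialStep.

Variables (R : nzSemiRingType) (p : {poly R}).

Let coef_trinomial_comp_X2 k : ((1 + 'X + 'X^2) * (p \Po 'X^2))`_k =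
  (if odd k then 0 else p`_k./2)
  + (if k is k'.+1 then (if odd k' then 0 else p`_k'./2) else 0)
  + (if k is k'.+2 then (if odd k' then 0 else p`_k'./2) else 0).
Proof.
rewrite !mulrDl mul1r !coefD coefXM coefXnM !coef_comp_poly_Xn // !dvdn2 !divn2.
by case: k => [|[|k]] //=; rewrite subn2 /= !negbK; case: odd.
Qed.

Lemma coef_trinomial_comp_X2_0 : ((1 + 'X + 'X^2) * (p \Po 'X^2))`_0 = p`_0.
Proof. by rewrite coef_trinomial_comp_X2 /= !addr0. Qed.

Lemma coef_trinomial_comp_X2_odd j :
  ((1 + 'X + 'X^2) * (p \Po 'X^2))`_j.*2.+1 = p`_j.
Proof.
rewrite coef_trinomial_comp_X2 /= odd_double doubleK add0r.
by case: j => [|j]; rewrite ?doubleS /= ?odd_double addr0.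
Qed.

Lemma coef_trinomial_comp_X2_even j :
  ((1 + 'X + 'X^2) * (p \Po 'X^2))`_j.+1.*2 = p`_j + p`_j.+1.
Proof.
by rewrite coef_trinomial_comp_X2 doubleS /= odd_double /= doubleK addr0 addrC.
Qed.

End TrinomialStep.

Lemma sternF_S n : sternF n.+1 = (1 + 'X + 'X^2) * (sternF n \Po 'X^2).
Proof.
apply/polyP => [[|k]]; first by rewrite coef_trinomial_comp_X2_0 !coef_sternF !stern0.
rewrite -(odd_double_half k); case: odd => /=.
- by rewrite add1n -doubleS coef_trinomial_comp_X2_even !coef_sternF stern_even natrD.
- by rewrite add0n coef_trinomial_comp_X2_odd !coef_sternF stern_odd.
Qed.

Lemma prod_trinomials_S (R : comNzRingType) n :
  \prod_(i < n.+1) (1 + 'X^(2 ^ i) + 'X^(2 * 2 ^ i))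
  = (1 + 'X + 'X^2) * (\prod_(i < n) (1 + 'X^(2 ^ i) + 'X^(2 * 2 ^ i)) \Po 'X^2)
    :> {poly R}.
Proof.
rewrite big_ord_recl expn0 muln1 expr1 rmorph_prod; congr (_ * _).
apply: eq_bigr => i _; rewrite !rmorphD rmorph1 /= !rmorphXn /= comp_polyX -!exprM.
by rewrite expnS mulnA (mulnC _ 2).
Qed.

(* The identity also holds for n = 0. *)
Theorem theorem1p1 (n : nat) : (1 <= n)%N ->
  sternF n = \prod_(i < n) (1 + 'X^(2 ^ i) + 'X^(2 * 2 ^ i)).
Proof.
move=> _; elim: n => [|n IH]; last by rewrite sternF_S IH prod_trinomials_S.
by apply/polyP => k; rewrite big_ord0 coef_sternF coef1; case: k.
Qed.
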